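(* Let $\phi:Z\to[-\infty,+\infty]$ be proper and closed and suppose Assumptions (A1) and (A2) hold for some $\lambda\in\mathbb R$. Then for every $z\in\overline{D\phi}$, $\lim_{\tau\downarrow0}J_\tau z=z$. In particular $\overline{D\phi}=\overline{D(|\partial\phi|)}$.
   Context: $(X,\mathsf d_X)$, $(Y,\mathsf d_Y)$ complete metric spaces; $Z=X\times Y$ with $\mathsf d_Z=(\mathsf d_X^2+\mathsf d_Y^2)^{1/2}$. $D_X\phi=\{x:\phi(x,y)<+\infty\ \forall y\}$, $D_Y\phi=\{y:\phi(x,y)>-\infty\ \forall x\}$, $D\phi=D_X\phi\times D_Y\phi$; proper: $D\phi\ne\emptyset$; closed: for $x\in D_X\phi$, $y\mapsto\phi(x,y)$ upper semicontinuous, for $y\in D_Y\phi$, $x\mapsto\phi(x,y)$ lower semicontinuous. (A1): $\phi=+\infty$ on $(X\setminus D_X\phi)\times D_Y\phi$, $\phi=-\infty$ on $D_X\phi\times(Y\setminus D_Y\phi)$. $\lambda^-=\max\{-\lambda,0\}$, $1/\lambda^-:=+\infty$ if $\lambda^-=0$. $\Phi_\tau(x,y;x',y')=\phi(x',y')+\frac1{2\tau}(\mathsf d_X^2(x',x)-\mathsf d_Y^2(y',y))$. $f$ on $Z$ is $\mu$-convex-concave along curves $\gamma,\sigma$ if for all $t\in[0,1]$: $f(\gamma_t,y)\le(1-t)f(\gamma_0,y)+tf(\gamma_1,y)-\frac\mu2t(1-t)\mathsf d_X^2(\gamma_0,\gamma_1)$ for all $y$ and $f(x,\sigma_t)\ge(1-t)f(x,\sigma_0)+tf(x,\sigma_1)+\frac\mu2t(1-t)\mathsf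 d_Y^2(\sigma_0,\sigma_1)$ for all $x$. (A2) for $\lambda$: for every $(x,y)\in Z$, $(x_0,y_0),(x_1,y_1)\in D\phi$ there are continuous curves $\gamma$ from $x_0$ to $x_1$, $\sigma$ from $y_0$ to $y_1$ such that for all $\tau\in(0,1/\lambda^-)$, $(x',y')\mapsto\Phi_\tau(x,y;x',y')$ is $(\tau^{-1}+\lambda)$-convex-concave along them. For $\tau\in(0,1/\lambda^-)$, $J_\tau z$ is the (unique, existing) saddle point of $z'\mapsto\Phi_\tau(z;z')$. Slope: for $z=(x,y)\in D\phi$ not isolated, $|\partial\phi|(z)=\limsup_{D\phi\ni z'=(x',y')\to z}\frac{\max\{\phi(x,y')-\phi(x',y),0\}}{\mathsf d_Z(z',z)}$; $0$ at isolated points of $D\phi$; $+\infty$ off $D\phi$. $D(|\partial\phi|)=\{z\in D\phi:|\partial\phi|(z)<+\infty\}$. *)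

From Stdlib Require Import Reals Classical ClassicalEpsilon.
From Coquelicot Require Import Coquelicot.
Open Scope R_scope.

Definition is_metric {X : Type} (d : X -> X -> R) : Prop :=
  (forall x y, 0 <= d x y) /\
  (forall x y, d x y = 0 <-> x = y) /\
  (forall x y, d x y = d y x) /\
  (forall x y z, d x z <= d x y + d y z).

Definition is_complete {X : Type} (d : X -> X -> R) : Prop :=
  forall u : nat -> X,
    (forall eps, 0 < eps -> exists N, forall m n, (N <= m)%nat -> (N <= n)%nat ->
        d (u m) (u n) < eps) ->
    exists l, forall eps, 0 < eps -> exists N, forall n, (N <= n)%nat -> d (u n) l < eps.

Definition dZ {X Y : Type} (dX : X -> X -> R) (dY : Y -> Y -> R)
  (z z' : X * Y) : R :=
  sqrt (dX (fst z) (fst z') ^ 2 + dY (snd z) (snd z') ^ 2).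

Definition in_closure {T : Type} (d : T -> T -> R) (S : T -> Prop) (z : T) : Prop :=
  forall eps, 0 < eps -> exists z', S z' /\ d z z' < eps.

Definition DX {X Y : Type} (phi : X -> Y -> Rbar) (x : X) : Prop :=
  forall y, Rbar_lt (phi x y) p_infty.

Definition DY {X Y : Type} (phi : X -> Y -> Rbar) (y : Y) : Prop :=
  forall x, Rbar_lt m_infty (phi x y).

Definition Dphi {X Y : Type} (phi : X -> Y -> Rbar) (z : X * Y) : Prop :=
  DX phi (fst z) /\ DY phi (snd z).

Definition sp_proper {X Y : Type} (phi : X -> Y -> Rbar) : Prop :=
  exists z, Dphi phi z.

Definition usc_at {T : Type} (d : T -> T -> R) (f : T -> Rbar) (t0 : T) : Prop :=
  forall c : R, Rbar_lt (f t0) c ->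
    exists delta, 0 < delta /\ forall t, d t t0 < delta -> Rbar_lt (f t) c.

Definition lsc_at {T : Type} (d : T -> T -> R) (f : T -> Rbar) (t0 : T) : Prop :=
  forall c : R, Rbar_lt c (f t0) ->
    exists delta, 0 < delta /\ forall t, d t t0 < delta -> Rbar_lt c (f t).

Definition sp_closed {X Y : Type} (dX : X -> X -> R) (dY : Y -> Y -> R)
  (phi : X -> Y -> Rbar) : Prop :=
  (forall x, DX phi x -> forall y0, usc_at dY (fun y => phi x y) y0) /\
  (forall y, DY phi y -> forall x0, lsc_at dX (fun x => phi x y) x0).

Definition assumption_A1 {X Y : Type} (phi : X -> Y -> Rbar) : Prop :=
  (forall x y, ~ DX phi x -> DY phi y -> phi x y = p_infty) /\
  (forall x y, DX phi x -> ~ DY phi y -> phi x y = m_infty).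

(** lambda^- = max(-lambda, 0); tau in (0, 1/lambda^-) with 1/0 = +oo. *)
Definition lam_neg (lam : R) : R := Rmax (- lam) 0.

Definition tau_adm (lam tau : R) : Prop :=
  0 < tau /\ (lam_neg lam = 0 \/ tau * lam_neg lam < 1).

Definition Phi_tau {X Y : Type} (dX : X -> X -> R) (dY : Y -> Y -> R)
  (phi : X -> Y -> Rbar) (tau : R) (z : X * Y) (x' : X) (y' : Y) : Rbar :=
  Rbar_plus (phi x' y')
    (Finite ((dX x' (fst z) ^ 2 - dY y' (snd z) ^ 2) / (2 * tau))).

Definition curve_from_to {T : Type} (d : T -> T -> R) (g : R -> T) (a b : T) : Prop :=
  g 0 = a /\ g 1 = b /\
  forall t, 0 <= t <= 1 -> forall eps, 0 < eps -> exists delta, 0 < delta /\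
    forall s, 0 <= s <= 1 -> Rabs (s - t) < delta -> d (g s) (g t) < eps.

Definition convex_concave_along {X Y : Type} (dX : X -> X -> R) (dY : Y -> Y -> R)
  (f : X -> Y -> Rbar) (mu : R) (gamma : R -> X) (sigma : R -> Y) : Prop :=
  forall t, 0 <= t <= 1 ->
    (forall y, Rbar_le (f (gamma t) y)
       (Rbar_plus
          (Rbar_plus (Rbar_mult (1 - t) (f (gamma 0) y)) (Rbar_mult t (f (gamma 1) y)))
          (Finite (- (mu / 2) * t * (1 - t) * dX (gamma 0) (gamma 1) ^ 2)))) /\
    (forall x, Rbar_le
       (Rbar_plus
          (Rbar_plus (Rbar_mult (1 - t) (f x (sigma 0))) (Rbar_mult t (f x (sigma 1))))
          (Finite ((mu / 2) * t * (1 - t) * dY (sigma 0) (sigma 1) ^ 2)))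
       (f x (sigma t))).

Definition assumption_A2 {X Y : Type} (dX : X -> X -> R) (dY : Y -> Y -> R)
  (phi : X -> Y -> Rbar) (lam : R) : Prop :=
  forall (z : X * Y) (x0 : X) (y0 : Y) (x1 : X) (y1 : Y),
    Dphi phi (x0, y0) -> Dphi phi (x1, y1) ->
    exists (gamma : R -> X) (sigma : R -> Y),
      curve_from_to dX gamma x0 x1 /\ curve_from_to dY sigma y0 y1 /\
      forall tau, tau_adm lam tau ->
        convex_concave_along dX dY (Phi_tau dX dY phi tau z) (/ tau + lam) gamma sigma.

Definition is_saddle {X Y : Type} (f : X -> Y -> Rbar) (w : X * Y) : Prop :=
  forall x' y', Rbar_le (f (fst w) y') (f (fst w) (snd w)) /\
                Rbar_le (f (fst w) (snd w)) (f x' (snd w)).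

(** max{phi(x,y') - phi(x',y), 0} / d_Z(z',z); for z, z' in D(phi) both
    values phi(x,y'), phi(x',y) are finite, so real parts are exact. *)
Definition slope_quot {X Y : Type} (dX : X -> X -> R) (dY : Y -> Y -> R)
  (phi : X -> Y -> Rbar) (z z' : X * Y) : R :=
  Rmax (real (phi (fst z) (snd z')) - real (phi (fst z') (snd z))) 0
  / dZ dX dY z' z.

Definition isolated_in {T : Type} (d : T -> T -> R) (S : T -> Prop) (z : T) : Prop :=
  exists r, 0 < r /\ forall z', S z' -> d z' z < r -> z' = z.

Definition slope_sup {X Y : Type} (dX : X -> X -> R) (dY : Y -> Y -> R)
  (phi : X -> Y -> Rbar) (z : X * Y) (r : R) : Rbar :=
  Lub_Rbar (fun q => exists z', Dphi phi z' /\ 0 < dZ dX dY z' z < r /\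
                                q = slope_quot dX dY phi z z').

Definition slope_limsup {X Y : Type} (dX : X -> X -> R) (dY : Y -> Y -> R)
  (phi : X -> Y -> Rbar) (z : X * Y) : Rbar :=
  Glb_Rbar (fun q => exists r, 0 < r /\ slope_sup dX dY phi z r = Finite q).

Definition slope {X Y : Type} (dX : X -> X -> R) (dY : Y -> Y -> R)
  (phi : X -> Y -> Rbar) (z : X * Y) : Rbar :=
  if excluded_middle_informative (Dphi phi z) then
    (if excluded_middle_informative (isolated_in (dZ dX dY) (Dphi phi) z)
     then Finite 0 else slope_limsup dX dY phi z)
  else p_infty.

Definition Dslope {X Y : Type} (dX : X -> X -> R) (dY : Y -> Y -> R)
  (phi : X -> Y -> Rbar) (z : X * Y) : Prop :=
  Dphi phi z /\ Rbar_lt (slope dX dY phi z) p_infty.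

(* For [z] in [Dphi], testing the saddle inequalities of [J tau z] against [z] gives
   [d (J tau z) z ^ 2 <= 2 tau (phi (x, y_tau) - phi (x_tau, y))]. The right-hand side is
   [O(tau)] because (A2) and semicontinuity make [phi (., y)] bounded below and [phi (x, .)]
   bounded above on balls: a very negative value of [phi (., y)] far from [x] would, by
   convexity along the curve, force values below [phi (x, y) - 1] arbitrarily close to [x].
   Weighting the inequalities of [J tau z] and [J s z'] against each other transfers the
   convergence to the closure of [Dphi], and testing against nearby points bounds the slope
   at [J tau z] by [(1 + 2 d (J tau z) z) / (2 tau)]. *)

From Stdlib Require Import Classical ClassicalEpsilon Reals Lra Psatz.
From Coquelicot Require Import Coquelicot.
Open Scope R_scope.

Definition continuous_01 (F : R -> R) : Prop :=
  forall t, 0 <= t <= 1 -> forall e, 0 < e -> exists delta, 0 < delta /\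
    forall s, 0 <= s <= 1 -> Rabs (s - t) < delta -> Rabs (F s - F t) < e.

Definition clamp01 (t : R) : R := Rmax 0 (Rmin t 1).

Lemma clamp01_id t : 0 <= t <= 1 -> clamp01 t = t.
Proof. intros; unfold clamp01, Rmax, Rmin; repeat destruct Rle_dec; lra. Qed.

Lemma clamp01_range t : 0 <= clamp01 t <= 1.
Proof. unfold clamp01, Rmax, Rmin; repeat destruct Rle_dec; lra. Qed.

Lemma clamp01_lipschitz s t : Rabs (clamp01 s - clamp01 t) <= Rabs (s - t).
Proof.
  unfold clamp01, Rmax, Rmin; repeat destruct Rle_dec;
    unfold Rabs; repeat destruct Rcase_abs; lra.
Qed.

(* Extending [F] by [F o clamp01] makes it continuous on all of [R], as [IVT_interv] needs. *)
Lemma continuous_01_IVT (F : R -> R) (t2 v : R) :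
  continuous_01 F -> 0 < t2 <= 1 -> F 0 < v < F t2 ->
  exists c, 0 <= c <= t2 /\ F c = v.
Proof.
  intros HF Ht2 Hv.
  set (G := fun t => F (clamp01 t) - v).
  assert (HG : forall t, 0 <= t <= t2 -> continuity_pt G t).
  { intros t Ht e He.
    destruct (HF t ltac:(lra) e He) as [delta [Hdelta Hclose]].
    exists delta; split; [exact Hdelta|]. intros s [_ Hs]. simpl in *; unfold R_dist in *.
    unfold G. rewrite (clamp01_id t) by lra.
    replace (F (clamp01 s) - v - (F t - v)) with (F (clamp01 s) - F t) by ring.
    apply Hclose; [apply clamp01_range|].
    rewrite <- (clamp01_id t) at 1 by lra.
    eapply Rle_lt_trans; [apply clamp01_lipschitz | exact Hs]. }
  destruct (Ranalysis5.IVT_interv G 0 t2 HG ltac:(lra)) as [c [Hc HGc]];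
    unfold G in *; rewrite ?clamp01_id in * by lra; try lra.
  exists c; split; lra.
Qed.

Lemma convex_estimate_small_t (a b f D M L tau lam t : R) :
  0 < tau -> 0 <= D <= M -> 0 < L -> 8 * M ^ 2 <= tau * L ^ 2 ->
  4 * Rabs lam * M ^ 2 <= L -> b - a <= - L -> 0 <= t <= 1 -> t * L <= 2 ->
  a - 1 + f ^ 2 / (2 * tau) <
    (1 - t) * a + t * (b + D ^ 2 / (2 * tau)) - (/ tau + lam) / 2 * t * (1 - t) * D ^ 2 ->
  f ^ 2 < 3 * tau - 2 * tau * (t * L).
Proof.
  intros Htau HD HL HML HlamM Hba Ht HtL H.
  assert (Hscaled : 2 * tau * (a - 1) + f ^ 2 <
    2 * tau * ((1 - t) * a + t * b) + t ^ 2 * D ^ 2 - lam * tau * (t * (1 - t) * D ^ 2)).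
  { apply (Rmult_lt_compat_l (2 * tau)) in H; [|lra].
    replace (2 * tau * (a - 1 + f ^ 2 / (2 * tau))) with (2 * tau * (a - 1) + f ^ 2) in H
      by (field; lra).
    replace (2 * tau * ((1 - t) * a + t * (b + D ^ 2 / (2 * tau))
      - (/ tau + lam) / 2 * t * (1 - t) * D ^ 2)) with
      (2 * tau * ((1 - t) * a + t * b) + t ^ 2 * D ^ 2 - lam * tau * (t * (1 - t) * D ^ 2)) in H
      by (field; lra).
    exact H. }
  assert (HtD : t ^ 2 * D ^ 2 <= tau / 2).
  { assert (0 <= t * L) by (apply Rmult_le_pos; lra).
    assert ((t * L) ^ 2 <= 4) by nra.
    assert ((t * L) ^ 2 * (8 * M ^ 2) <= 4 * (tau * L ^ 2)) by nra.
    assert (t ^ 2 * D ^ 2 <= t ^ 2 * M ^ 2)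
      by (apply Rmult_le_compat_l; [nra | apply pow_incr; lra]).
    nra. }
  assert (Hlam : - lam * (t * (1 - t) * D ^ 2) <= / 2).
  { assert (Hw : 0 <= t * (1 - t) * D ^ 2) by (apply Rmult_le_pos; nra).
    assert (- lam * (t * (1 - t) * D ^ 2) <= Rabs lam * (t * (1 - t) * D ^ 2)).
    { apply Rmult_le_compat_r; [exact Hw|]. rewrite <- Rabs_Ropp. apply Rle_abs. }
    assert ((t * (1 - t) * D ^ 2) * L <= 2 * M ^ 2) by nra.
    pose proof (Rabs_pos lam). nra. }
  assert (t * (b - a) <= - (t * L)) by nra.
  assert (2 * tau * (t * (b - a)) <= 2 * tau * - (t * L)) by (apply Rmult_le_compat_l; lra).
  assert (tau * (- lam * (t * (1 - t) * D ^ 2)) <= tau * / 2) by (apply Rmult_le_compat_l; lra).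
  lra.
Qed.

(* A curve along which [t |-> a - 1 + F t ^ 2 / (2 tau)] lies below the convexity bound
   while [F t < rho] cannot end at a very negative value [b]: for [t <= 2 / L] the
   distance [F t] is trapped below [sqrt (3 tau) <= rho / 2], yet it must cross [3 rho / 4]. *)
Lemma convex_curve_lower_bound (a M rho tau lam : R) :
  0 < rho -> 0 < tau -> 16 * tau <= rho ^ 2 -> 0 <= M ->
  exists C, forall b D (F : R -> R), 0 <= D <= M -> F 0 = 0 -> continuous_01 F ->
    (forall t, 0 <= t <= 1 -> F t < rho ->
       a - 1 + F t ^ 2 / (2 * tau) <
       (1 - t) * a + t * (b + D ^ 2 / (2 * tau)) - (/ tau + lam) / 2 * t * (1 - t) * D ^ 2) ->
    - C < b.
Proof.
  intros Hrho Htau Hrt HM.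
  set (L := 2 + 8 * M ^ 2 / tau + 4 * Rabs lam * M ^ 2).
  assert (HMtau : tau * (8 * M ^ 2 / tau) = 8 * M ^ 2) by (field; lra).
  assert (HL : 2 <= L /\ 8 * M ^ 2 / tau <= L /\ 4 * Rabs lam * M ^ 2 <= L).
  { assert (0 <= 8 * M ^ 2 / tau)
      by (unfold Rdiv; apply Rmult_le_pos; [nra | apply Rlt_le, Rinv_0_lt_compat; lra]).
    pose proof (Rabs_pos lam). unfold L; repeat split; nra. }
  assert (HML : 8 * M ^ 2 <= tau * L ^ 2).
  { destruct HL as [HL2 [HLM _]].
    assert (tau * (8 * M ^ 2 / tau) <= tau * L) by (apply Rmult_le_compat_l; lra).
    assert (tau * L <= tau * L ^ 2) by (apply Rmult_le_compat_l; nra).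
    lra. }
  exists (Rabs a + L). intros b D F HD HF0 HF Hconv.
  destruct (Rlt_or_le (- (Rabs a + L)) b) as [Hb | Hb]; [exact Hb | exfalso].
  assert (Hba : b - a <= - L) by (pose proof (Rle_abs (- a)); rewrite Rabs_Ropp in *; lra).
  set (t2 := 2 / L).
  assert (Ht2L : t2 * L = 2) by (unfold t2; field; lra).
  assert (Ht2 : 0 < t2 <= 1) by (split; nra).
  assert (Htrap : forall t, 0 <= t <= t2 -> F t < rho -> F t ^ 2 < 3 * tau - 2 * tau * (t * L)).
  { intros t Ht HFt.
    apply (convex_estimate_small_t a b (F t) D M L tau lam t); try lra; try nra.
    apply Hconv; lra. }
  destruct (Rlt_or_le (F t2) rho) as [Hlt | Hge].
  - pose proof (Htrap t2 ltac:(lra) Hlt). nra.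
  - destruct (continuous_01_IVT F t2 (3 * rho / 4) HF Ht2 ltac:(lra)) as [c [Hc HFc]].
    pose proof (Htrap c Hc ltac:(lra)) as Hcrho. rewrite HFc in Hcrho.
    assert (0 <= c * L) by nra. nra.
Qed.

Lemma sqrt_sum_sq_subadditive a1 b1 a2 b2 a b :
  0 <= a1 -> 0 <= b1 -> 0 <= a2 -> 0 <= b2 -> 0 <= a <= a1 + a2 -> 0 <= b <= b1 + b2 ->
  sqrt (a ^ 2 + b ^ 2) <= sqrt (a1 ^ 2 + b1 ^ 2) + sqrt (a2 ^ 2 + b2 ^ 2).
Proof.
  intros.
  set (S1 := sqrt (a1 ^ 2 + b1 ^ 2)). set (S2 := sqrt (a2 ^ 2 + b2 ^ 2)).
  assert (E1 : S1 ^ 2 = a1 ^ 2 + b1 ^ 2) by (apply pow2_sqrt; nra).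
  assert (E2 : S2 ^ 2 = a2 ^ 2 + b2 ^ 2) by (apply pow2_sqrt; nra).
  assert (P1 : 0 <= S1) by apply sqrt_pos. assert (P2 : 0 <= S2) by apply sqrt_pos.
  assert (Cauchy_Schwarz : a1 * a2 + b1 * b2 <= S1 * S2).
  { assert ((a1 * a2 + b1 * b2) ^ 2 <= (S1 * S2) ^ 2).
    { replace ((S1 * S2) ^ 2) with (S1 ^ 2 * S2 ^ 2) by ring. rewrite E1, E2.
      pose proof (pow2_ge_0 (a1 * b2 - a2 * b1)). nra. }
    assert (0 <= S1 * S2) by nra.
    destruct (Rle_or_lt (a1 * a2 + b1 * b2) (S1 * S2)); [assumption | nra]. }
  rewrite <- (sqrt_pow2 (S1 + S2)) by lra. apply sqrt_le_1_alt. nra.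
Qed.

Section Metric.

Context {T : Type} {d : T -> T -> R} (Hd : is_metric d).

Lemma metric_ge0 x y : 0 <= d x y.
Proof. apply Hd. Qed.

Lemma metric_eq0 x y : d x y = 0 -> x = y.
Proof. apply Hd. Qed.

Lemma metric_refl x : d x x = 0.
Proof. apply Hd; reflexivity. Qed.

Lemma metric_sym x y : d x y = d y x.
Proof. apply Hd. Qed.

Lemma metric_triangle x y z : d x z <= d x y + d y z.
Proof. apply Hd. Qed.

Lemma curve_dist_continuous_01 (g : R -> T) a b c :
  curve_from_to d g a b -> continuous_01 (fun t => d (g t) c).
Proof.
  intros [_ [_ Hg]] t Ht e He.
  destruct (Hg t Ht e He) as [delta [Hdelta Hclose]].
  exists delta; split; [exact Hdelta|]. intros s Hs Hst.
  specialize (Hclose s Hs Hst).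
  pose proof (metric_triangle (g s) (g t) c). pose proof (metric_triangle (g t) (g s) c).
  rewrite (metric_sym (g t) (g s)) in *.
  apply Rabs_def1; lra.
Qed.

End Metric.

Section ProductMetric.

Context {X Y : Type} {dX : X -> X -> R} {dY : Y -> Y -> R}.

Lemma dZ_sq z z' : dZ dX dY z z' ^ 2 = dX (fst z) (fst z') ^ 2 + dY (snd z) (snd z') ^ 2.
Proof.
  apply pow2_sqrt.
  pose proof (pow2_ge_0 (dX (fst z) (fst z'))). pose proof (pow2_ge_0 (dY (snd z) (snd z'))).
  lra.
Qed.

Hypotheses (HdX : is_metric dX) (HdY : is_metric dY).

Lemma dZ_fst_le z z' : dX (fst z) (fst z') <= dZ dX dY z z'.
Proof.
  rewrite <- (sqrt_pow2 (dX _ _)) by apply (metric_ge0 HdX).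
  apply sqrt_le_1_alt. pose proof (pow2_ge_0 (dY (snd z) (snd z'))). lra.
Qed.

Lemma dZ_snd_le z z' : dY (snd z) (snd z') <= dZ dX dY z z'.
Proof.
  rewrite <- (sqrt_pow2 (dY _ _)) by apply (metric_ge0 HdY).
  apply sqrt_le_1_alt. pose proof (pow2_ge_0 (dX (fst z) (fst z'))). lra.
Qed.

Lemma dZ_metric : is_metric (dZ dX dY).
Proof.
  split; [intros; apply sqrt_pos|]. split; [|split].
  - intros [x y] [x' y']; split.
    + intros H0.
      pose proof (dZ_fst_le (x, y) (x', y')). pose proof (dZ_snd_le (x, y) (x', y')).
      pose proof (metric_ge0 HdX x x'). pose proof (metric_ge0 HdY y y'). simpl in *.
      rewrite (metric_eq0 HdX x x'), (metric_eq0 HdY y y') by lra. reflexivity.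
    + intros [= -> ->]. unfold dZ.
      rewrite (metric_refl HdX), (metric_refl HdY).
      replace (0 ^ 2 + 0 ^ 2) with 0 by ring. apply sqrt_0.
  - intros z z'. unfold dZ. rewrite (metric_sym HdX), (metric_sym HdY). reflexivity.
  - intros z1 z2 z3. unfold dZ.
    apply sqrt_sum_sq_subadditive; try apply (metric_ge0 HdX); try apply (metric_ge0 HdY);
      split; try apply (metric_ge0 HdX); try apply (metric_ge0 HdY);
      apply metric_triangle; assumption.
Qed.

End ProductMetric.

Lemma Dphi_finite {X Y : Type} {phi : X -> Y -> Rbar} {x y} :
  DX phi x -> DY phi y -> phi x y = Finite (real (phi x y)).
Proof. intros Hx Hy. specialize (Hx y). specialize (Hy x). destruct (phi x y); easy. Qed.

Lemma Rbar_lt_plus_le (c q r : R) (u : Rbar) :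
  Rbar_lt c u -> Rbar_le (Rbar_plus u q) r -> c + q < r.
Proof. destruct u; simpl; intros; easy || lra. Qed.

Lemma Rbar_gt_plus_ge (c q l : R) (u : Rbar) :
  Rbar_lt u c -> Rbar_le l (Rbar_plus u q) -> l < c + q.
Proof. destruct u; simpl; intros; easy || lra. Qed.

Definition tau_max (lam : R) : R := / (lam_neg lam + 1).

Lemma tau_max_pos lam : 0 < tau_max lam.
Proof.
  unfold tau_max, lam_neg. apply Rinv_0_lt_compat. pose proof (Rmax_r (- lam) 0). lra.
Qed.

Lemma tau_adm_le_max {lam tau} : 0 < tau <= tau_max lam -> tau_adm lam tau.
Proof.
  intros Htau. split; [lra | right].
  assert (0 <= lam_neg lam) by apply Rmax_r.
  assert (tau_max lam * (lam_neg lam + 1) = 1) by (unfold tau_max; field; lra).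
  nra.
Qed.

Lemma tau_adm_le {lam tau s} : tau_adm lam s -> 0 < tau <= s -> tau_adm lam tau.
Proof.
  intros [Hs Hsl] Htau. split; [lra|].
  destruct Hsl as [Hl | Hl]; [left; exact Hl | right].
  assert (0 <= lam_neg lam) by apply Rmax_r. nra.
Qed.

Lemma tau_max_below lam r : 0 < r -> exists tau, 0 < tau < r /\ tau <= tau_max lam.
Proof.
  intros Hr. exists (Rmin (tau_max lam) (r / 2)).
  pose proof (tau_max_pos lam). pose proof (Rmin_l (tau_max lam) (r / 2)).
  pose proof (Rmin_r (tau_max lam) (r / 2)).
  repeat split; try lra. apply Rmin_glb_lt; lra.
Qed.

Section LocalBounds.

Context {X Y : Type} {dX : X -> X -> R} {dY : Y -> Y -> R}.
Hypotheses (HdX : is_metric dX) (HdY : is_metric dY).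
Context {phi : X -> Y -> Rbar} {lam : R}.
Hypotheses (Hclosed : sp_closed dX dY phi) (HA2 : assumption_A2 dX dY phi lam).

Lemma phi_bounded_below_on_balls x y : DX phi x -> DY phi y -> forall M, 0 <= M ->
  exists C, forall v, DX phi v -> dX x v <= M -> - C < real (phi v y).
Proof.
  intros Hx Hy M HM.
  destruct (proj2 Hclosed y Hy x (real (phi x y) - 1)) as [rho [Hrho Hlsc]].
  { rewrite (Dphi_finite Hx Hy); simpl; lra. }
  destruct (tau_max_below lam (rho ^ 2 / 16) ltac:(nra)) as [tau [Htau Htau_max]].
  destruct (convex_curve_lower_bound (real (phi x y)) M rho tau lam Hrho (proj1 Htau)
    ltac:(lra) HM) as [C HC].
  exists C. intros v Hv Hxv.
  destruct (HA2 (x, y) x y v y (conj Hx Hy) (conj Hv Hy)) as [g [sigma [Hg [_ Hconv]]]].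
  apply (HC (real (phi v y)) (dX x v) (fun t => dX (g t) x)).
  - split; [apply (metric_ge0 HdX) | exact Hxv].
  - destruct Hg as [Hg0 _]; rewrite Hg0; apply (metric_refl HdX).
  - eapply curve_dist_continuous_01; eassumption.
  - intros t Ht Hnear.
    destruct Hg as [Hg0 [Hg1 _]].
    destruct (Hconv tau (tau_adm_le_max (conj (proj1 Htau) Htau_max)) t Ht) as [Hconvx _].
    specialize (Hconvx y). unfold Phi_tau in Hconvx. simpl fst in Hconvx; simpl snd in Hconvx.
    rewrite Hg0, Hg1, (Dphi_finite Hx Hy), (Dphi_finite Hv Hy), (metric_refl HdX x),
      (metric_refl HdY y), (metric_sym HdX v x) in Hconvx.
    pose proof (Rbar_lt_plus_le _ _ _ _ (Hlsc (g t) Hnear) Hconvx).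
    lra.
Qed.

Lemma phi_bounded_above_on_balls x y : DX phi x -> DY phi y -> forall M, 0 <= M ->
  exists C, forall v, DY phi v -> dY y v <= M -> real (phi x v) < C.
Proof.
  intros Hx Hy M HM.
  destruct (proj1 Hclosed x Hx y (real (phi x y) + 1)) as [rho [Hrho Husc]].
  { rewrite (Dphi_finite Hx Hy); simpl; lra. }
  destruct (tau_max_below lam (rho ^ 2 / 16) ltac:(nra)) as [tau [Htau Htau_max]].
  destruct (convex_curve_lower_bound (- real (phi x y)) M rho tau lam Hrho (proj1 Htau)
    ltac:(lra) HM) as [C HC].
  exists C. intros v Hv Hyv.
  destruct (HA2 (x, y) x y x v (conj Hx Hy) (conj Hx Hv)) as [g [sigma [_ [Hsigma Hconv]]]].
  enough (- C < - real (phi x v)) by lra.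
  apply (HC (- real (phi x v)) (dY y v) (fun t => dY (sigma t) y)).
  - split; [apply (metric_ge0 HdY) | exact Hyv].
  - destruct Hsigma as [Hs0 _]; rewrite Hs0; apply (metric_refl HdY).
  - eapply curve_dist_continuous_01; eassumption.
  - intros t Ht Hnear.
    destruct Hsigma as [Hs0 [Hs1 _]].
    destruct (Hconv tau (tau_adm_le_max (conj (proj1 Htau) Htau_max)) t Ht) as [_ Hconcy].
    specialize (Hconcy x). unfold Phi_tau in Hconcy. simpl fst in Hconcy; simpl snd in Hconcy.
    rewrite Hs0, Hs1, (Dphi_finite Hx Hy), (Dphi_finite Hx Hv), (metric_refl HdX x),
      (metric_refl HdY y), (metric_sym HdY v y) in Hconcy.
    pose proof (Rbar_gt_plus_ge _ _ _ _ (Husc (sigma t) Hnear) Hconcy).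
    lra.
Qed.

End LocalBounds.

Section Slope.

Context {X Y : Type} {dX : X -> X -> R} {dY : Y -> Y -> R}.
Hypotheses (HdX : is_metric dX) (HdY : is_metric dY).
Context {phi : X -> Y -> Rbar}.

Local Notation d := (dZ dX dY).

(* At a non-isolated point the ball of radius [r] meets [Dphi], so the sup over it is a
   real number (not the [m_infty] of an empty sup) and bounds the limsup from above. *)
Lemma slope_lt_pinfty_of_quot_bound z r B : Dphi phi z -> 0 < r ->
  (forall z', Dphi phi z' -> 0 < d z' z < r -> slope_quot dX dY phi z z' <= B) ->
  Rbar_lt (slope dX dY phi z) p_infty.
Proof.
  intros Hz Hr Hbound. unfold slope.
  destruct (excluded_middle_informative (Dphi phi z)) as [_ | Hn]; [| contradiction].
  destruct (excluded_middle_informative (isolated_in d (Dphi phi) z)) as [_ | Hniso];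
    [exact I |].
  assert (Hnear : exists z1, Dphi phi z1 /\ 0 < d z1 z < r).
  { apply NNPP; intros Hnone; apply Hniso. exists r; split; [exact Hr |].
    intros z' Hz' Hd. apply NNPP; intros Hne; apply Hnone.
    exists z'; split; [exact Hz' | split; [| exact Hd]].
    destruct (metric_ge0 (dZ_metric HdX HdY) z' z) as [Hlt | Heq]; [exact Hlt |].
    exfalso; apply Hne, (metric_eq0 (dZ_metric HdX HdY)); auto. }
  destruct Hnear as [z1 [Hz1 Hd1]].
  set (S := fun q => exists z', Dphi phi z' /\ 0 < d z' z < r /\ q = slope_quot dX dY phi z z').
  destruct (Lub_Rbar_correct S) as [Hub Hleast].
  pose proof (Hub _ (ex_intro _ z1 (conj Hz1 (conj Hd1 eq_refl)))) as Hlo.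
  assert (Hhi : Rbar_le (Lub_Rbar S) B).
  { apply Hleast. intros q [z' [Hz' [Hd ->]]]. apply Hbound; assumption. }
  destruct (Lub_Rbar S) as [q | |] eqn:ES; try easy.
  unfold slope_limsup.
  destruct (Glb_Rbar_correct (fun q => exists r, 0 < r /\ slope_sup dX dY phi z r = Finite q))
    as [Hlb _].
  pose proof (Hlb q (ex_intro _ r (conj Hr ES))).
  destruct (Glb_Rbar _); easy.
Qed.

End Slope.

Lemma scale_le_div_2tau p1 p2 a b tau : 0 < tau ->
  p1 + a / (2 * tau) <= p2 + b / (2 * tau) -> 2 * tau * (p1 - p2) <= b - a.
Proof.
  intros Htau H. apply (Rmult_le_compat_l (2 * tau)) in H; [| lra].
  replace (2 * tau * (p1 + a / (2 * tau))) with (2 * tau * p1 + a) in H by (field; lra).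
  replace (2 * tau * (p2 + b / (2 * tau))) with (2 * tau * p2 + b) in H by (field; lra).
  lra.
Qed.

Section Resolvent.

Context {X Y : Type} {dX : X -> X -> R} {dY : Y -> Y -> R}.
Hypotheses (HdX : is_metric dX) (HdY : is_metric dY).
Context {phi : X -> Y -> Rbar} {lam : R} {J : R -> X * Y -> X * Y}.
Hypotheses (Hproper : sp_proper phi) (Hclosed : sp_closed dX dY phi)
  (HA2 : assumption_A2 dX dY phi lam).
Hypothesis HJ : forall tau z, tau_adm lam tau -> is_saddle (Phi_tau dX dY phi tau z) (J tau z).

Local Notation d := (dZ dX dY).

(* Testing the saddle inequalities against a point of [Dphi] rules out the infinite values. *)
Lemma resolvent_in_domain tau z : tau_adm lam tau -> Dphi phi (J tau z).
Proof.
  intros Htau. destruct Hproper as [[x0 y0] [Hx0 Hy0]]. split.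
  - intros y. destruct (HJ tau z Htau x0 y) as [H1 H2]. unfold Phi_tau in H1, H2.
    specialize (Hx0 (snd (J tau z))). simpl in Hx0.
    destruct (phi (fst (J tau z)) y); simpl; auto.
    destruct (phi (fst (J tau z)) (snd (J tau z))); simpl in H1, H2; try easy.
    destruct (phi x0 (snd (J tau z))); simpl in *; easy.
  - intros x. destruct (HJ tau z Htau x y0) as [H1 H2]. unfold Phi_tau in H1, H2.
    specialize (Hy0 (fst (J tau z))). simpl in Hy0.
    destruct (phi x (snd (J tau z))); simpl; auto.
    destruct (phi (fst (J tau z)) (snd (J tau z))); simpl in H1, H2; try easy.
    destruct (phi (fst (J tau z)) y0); simpl in *; easy.
Qed.

Lemma resolvent_variational_ineq tau z z' : tau_adm lam tau -> Dphi phi z' ->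
  2 * tau * (real (phi (fst (J tau z)) (snd z')) - real (phi (fst z') (snd (J tau z))))
  <= d z' z ^ 2 - d (J tau z) z ^ 2.
Proof.
  intros Htau [Hx' Hy'].
  destruct (resolvent_in_domain tau z Htau) as [Hwx Hwy].
  destruct (HJ tau z Htau (fst z') (snd z')) as [H1 H2]. unfold Phi_tau in H1, H2.
  rewrite (Dphi_finite Hwx Hy') in H1. rewrite (Dphi_finite Hwx Hwy) in H1, H2.
  rewrite (Dphi_finite Hx' Hwy) in H2.
  pose proof (scale_le_div_2tau _ _ _ _ tau (proj1 Htau) (Rle_trans _ _ _ H1 H2)).
  rewrite !dZ_sq. lra.
Qed.

(* Add the variational inequalities of [J tau z] against [J s z'] and of [J s z'] against
   [J tau z], weighted by [s] and [tau]: the [phi]-terms cancel. *)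
Lemma resolvent_compare tau s z z' : tau_adm lam tau -> tau_adm lam s ->
  s * (d (J tau z) z ^ 2 - d (J s z') z ^ 2) <=
  tau * (d (J tau z) z' ^ 2 - d (J s z') z' ^ 2).
Proof.
  intros Htau Hs.
  pose proof (resolvent_variational_ineq tau z (J s z') Htau (resolvent_in_domain s z' Hs)) as H1.
  pose proof (resolvent_variational_ineq s z' (J tau z) Hs (resolvent_in_domain tau z Htau)) as H2.
  pose proof (proj1 Htau). pose proof (proj1 Hs).
  set (c := real (phi (fst (J tau z)) (snd (J s z')))
            - real (phi (fst (J s z')) (snd (J tau z)))) in *.
  assert (s * (2 * tau * c) <= s * (d (J s z') z ^ 2 - d (J tau z) z ^ 2))
    by (apply Rmult_le_compat_l; [lra | exact H1]).
  assert (tau * (- (2 * s * c)) <= tau * (d (J tau z) z' ^ 2 - d (J s z') z' ^ 2))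
    by (apply Rmult_le_compat_l; [lra | unfold c in *; lra]).
  lra.
Qed.

Lemma resolvent_dist_monotone z tau s : 0 < tau <= s -> tau_adm lam s ->
  d (J tau z) z <= d (J s z) z.
Proof.
  intros Hts Hs.
  pose proof (resolvent_compare tau s z z (tau_adm_le Hs Hts) Hs).
  pose proof (metric_ge0 (dZ_metric HdX HdY) (J tau z) z).
  pose proof (metric_ge0 (dZ_metric HdX HdY) (J s z) z).
  destruct (Req_dec tau s) as [-> | Hne]; [lra |].
  assert (d (J tau z) z ^ 2 <= d (J s z) z ^ 2) by nra.
  nra.
Qed.

(* Monotonicity keeps [J tau z] in a fixed ball, where the local bounds on [phi] apply. *)
Lemma resolvent_dist_sq_bound z : Dphi phi z ->
  exists K, 0 < K /\ forall tau, 0 < tau <= tau_max lam -> d (J tau z) z ^ 2 <= tau * K.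
Proof.
  intros [Hx Hy].
  set (M := d (J (tau_max lam) z) z).
  assert (HM : 0 <= M) by apply (metric_ge0 (dZ_metric HdX HdY)).
  destruct (phi_bounded_below_on_balls HdX HdY Hclosed HA2 _ _ Hx Hy M HM) as [C1 HC1].
  destruct (phi_bounded_above_on_balls HdX HdY Hclosed HA2 _ _ Hx Hy M HM) as [C2 HC2].
  exists (2 * Rabs (C1 + C2) + 1). split; [pose proof (Rabs_pos (C1 + C2)); lra |].
  intros tau Htau.
  pose proof (tau_adm_le_max Htau) as Hadm.
  destruct (resolvent_in_domain tau z Hadm) as [Hwx Hwy].
  assert (Hball : d (J tau z) z <= M)
    by (apply resolvent_dist_monotone;
        [lra | apply tau_adm_le_max; pose proof (tau_max_pos lam); lra]).
  pose proof (resolvent_variational_ineq tau z z Hadm (conj Hx Hy)) as Hvar.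
  rewrite (metric_refl (dZ_metric HdX HdY)) in Hvar.
  assert (-C1 < real (phi (fst (J tau z)) (snd z))).
  { apply HC1; [exact Hwx |]. rewrite (metric_sym HdX).
    pose proof (dZ_fst_le (dY := dY) HdX (J tau z) z). lra. }
  assert (real (phi (fst z) (snd (J tau z))) < C2).
  { apply HC2; [exact Hwy |]. rewrite (metric_sym HdY).
    pose proof (dZ_snd_le (dX := dX) HdY (J tau z) z). lra. }
  assert (tau * (C1 + C2) <= tau * Rabs (C1 + C2))
    by (apply Rmult_le_compat_l; [lra | apply Rle_abs]).
  nra.
Qed.

Lemma resolvent_converges_in_domain z : Dphi phi z ->
  forall eps, 0 < eps -> exists delta, 0 < delta /\
    forall tau, 0 < tau < delta -> d (J tau z) z < eps.
Proof.
  intros Hz eps Heps.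
  destruct (resolvent_dist_sq_bound z Hz) as [K [HK Hbound]].
  exists (Rmin (tau_max lam) (eps ^ 2 / K)). split.
  { apply Rmin_glb_lt; [apply tau_max_pos | apply Rdiv_lt_0_compat; nra]. }
  intros tau [Htau Hdelta].
  pose proof (Rmin_l (tau_max lam) (eps ^ 2 / K)). pose proof (Rmin_r (tau_max lam) (eps ^ 2 / K)).
  pose proof (Hbound tau ltac:(lra)).
  assert (tau * K < eps ^ 2).
  { assert (Hlt : tau * K < eps ^ 2 / K * K) by (apply Rmult_lt_compat_r; lra).
    replace (eps ^ 2 / K * K) with (eps ^ 2) in Hlt by (field; lra). exact Hlt. }
  pose proof (metric_ge0 (dZ_metric HdX HdY) (J tau z) z).
  nra.
Qed.

(* With [z'] in [Dphi] close to [z], [resolvent_compare] for [tau <= s / 4] bounds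
   [d (J tau z) z] by [d (J s z') z] and [d z z'], both small. *)
Lemma resolvent_converges_in_closure z : in_closure d (Dphi phi) z ->
  forall eps, 0 < eps -> exists delta, 0 < delta /\
    forall tau, 0 < tau < delta -> d (J tau z) z < eps.
Proof.
  intros Hz eps Heps.
  pose proof (dZ_metric HdX HdY) as Hd.
  set (e := eps / 8).
  destruct (Hz e ltac:(unfold e; lra)) as [z' [Hz' Hzz']].
  destruct (resolvent_converges_in_domain z' Hz' e ltac:(unfold e; lra))
    as [delta [Hdelta Hconv']].
  destruct (tau_max_below lam delta Hdelta) as [s [Hs Hs_max]].
  assert (Hsadm : tau_adm lam s) by (apply tau_adm_le_max; lra).
  specialize (Hconv' s Hs).
  exists (s / 4). split; [lra |]. intros tau Htau.
  pose proof (resolvent_compare tau s z z' (tau_adm_le (tau := tau) Hsadm ltac:(lra)) Hsadm)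
    as Hcmp.
  pose proof (metric_ge0 Hd (J tau z) z'). pose proof (metric_ge0 Hd (J s z') z').
  pose proof (metric_ge0 Hd (J s z') z). pose proof (metric_ge0 Hd (J tau z) z).
  pose proof (metric_triangle Hd (J s z') z' z). pose proof (metric_triangle Hd (J tau z) z z').
  rewrite (metric_sym Hd z' z) in *.
  set (D := d (J tau z) z) in *. set (E := d (J s z') z) in *.
  assert (HE : E <= 2 * e) by lra.
  assert (HDz' : d (J tau z) z' <= D + e) by lra.
  assert (s * (D ^ 2 - E ^ 2) <= s * ((D + e) ^ 2 / 4)).
  { assert (d (J tau z) z' ^ 2 <= (D + e) ^ 2) by (apply pow_incr; lra).
    assert (tau * (D + e) ^ 2 <= s / 4 * (D + e) ^ 2) by (apply Rmult_le_compat_r; nra).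
    nra. }
  assert (D ^ 2 - E ^ 2 <= (D + e) ^ 2 / 4) by (apply (Rmult_le_reg_l s); lra).
  assert (E ^ 2 <= (2 * e) ^ 2) by (apply pow_incr; lra).
  assert ((D + e) ^ 2 <= 2 * D ^ 2 + 2 * e ^ 2) by (pose proof (pow2_ge_0 (D - e)); nra).
  assert (D ^ 2 <= 9 * e ^ 2) by nra.
  unfold e in *. nra.
Qed.

Lemma resolvent_slope_quot_bound tau z z' : tau_adm lam tau -> Dphi phi z' ->
  0 < d z' (J tau z) < 1 ->
  slope_quot dX dY phi (J tau z) z' <= (1 + 2 * d (J tau z) z) / (2 * tau).
Proof.
  intros Htau Hz' Hdist.
  pose proof (dZ_metric HdX HdY) as Hd. pose proof (proj1 Htau).
  pose proof (resolvent_variational_ineq tau z z' Htau Hz') as Hvar.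
  pose proof (metric_triangle Hd z' (J tau z) z). pose proof (metric_ge0 Hd z' z).
  pose proof (metric_ge0 Hd (J tau z) z).
  unfold slope_quot.
  set (R0 := d (J tau z) z) in *. set (delta := d z' (J tau z)) in *.
  set (c := real (phi (fst (J tau z)) (snd z')) - real (phi (fst z') (snd (J tau z)))) in *.
  set (B := (1 + 2 * R0) / (2 * tau)).
  assert (Hc : 2 * tau * c <= delta * (1 + 2 * R0)).
  { assert (d z' z ^ 2 <= (delta + R0) ^ 2) by (apply pow_incr; lra). nra. }
  assert (HB : 2 * tau * (B * delta) = delta * (1 + 2 * R0)) by (unfold B; field; lra).
  assert (HB0 : 0 <= B)
    by (unfold B; apply Rmult_le_pos; [lra | apply Rlt_le, Rinv_0_lt_compat; lra]).
  apply (Rmult_le_reg_r delta); [lra |].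
  unfold Rdiv at 1. rewrite Rmult_assoc, Rinv_l, Rmult_1_r by lra.
  apply Rmax_lub; nra.
Qed.

Lemma resolvent_in_Dslope tau z : tau_adm lam tau -> Dslope dX dY phi (J tau z).
Proof.
  intros Htau. pose proof (resolvent_in_domain tau z Htau) as Hw.
  split; [exact Hw |].
  apply (slope_lt_pinfty_of_quot_bound HdX HdY _ 1 ((1 + 2 * d (J tau z) z) / (2 * tau))
    Hw Rlt_0_1).
  intros z' Hz' Hdist. apply resolvent_slope_quot_bound; assumption.
Qed.

End Resolvent.

Theorem mainTheorem13
  (X Y : Type) (dX : X -> X -> R) (dY : Y -> Y -> R)
  (HdX : is_metric dX) (HdY : is_metric dY)
  (HcX : is_complete dX) (HcY : is_complete dY)
  (phi : X -> Y -> Rbar) (lam : R)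
  (Hproper : sp_proper phi) (Hclosed : sp_closed dX dY phi)
  (HA1 : assumption_A1 phi) (HA2 : assumption_A2 dX dY phi lam)
  (J : R -> X * Y -> X * Y)
  (HJ : forall tau z, tau_adm lam tau -> is_saddle (Phi_tau dX dY phi tau z) (J tau z)) :
  (forall z, in_closure (dZ dX dY) (Dphi phi) z ->
     forall eps, 0 < eps -> exists delta, 0 < delta /\
       forall tau, 0 < tau < delta -> dZ dX dY (J tau z) z < eps) /\
  (forall z, in_closure (dZ dX dY) (Dphi phi) z <->
             in_closure (dZ dX dY) (Dslope dX dY phi) z).
Proof.
  (* Completeness and (A1) only serve the existence of the saddle points [J tau z],
     which is assumed here. *)
  pose proof (resolvent_converges_in_closure HdX HdY Hproper Hclosed HA2 HJ) as Hconv.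
  split; [exact Hconv |]. intros z; split.
  - intros Hz eps Heps.
    destruct (Hconv z Hz eps Heps) as [delta [Hdelta Hclose]].
    destruct (tau_max_below lam delta Hdelta) as [tau [Htau Htau_max]].
    exists (J tau z). split.
    + apply (resolvent_in_Dslope HdX HdY Hproper HJ), tau_adm_le_max; lra.
    + rewrite (metric_sym (dZ_metric HdX HdY)). apply Hclose; exact Htau.
  - intros Hz eps Heps.
    destruct (Hz eps Heps) as [z' [[Hz' _] Hzz']].
    exists z'; split; assumption.
Qed.
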